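(* Let $n\ge 1$ be an integer and $\beta>0$. Let $(s,z)$ be the Nielsen–Olesen vortex profile, i.e. real functions on $(0,\infty)$ solving \begin{align*} &s''+\tfrac{s'}{r}-\big[z^2+\tfrac{\beta}{2}(s^2-1)\big]s=0,\\ &z''+\tfrac{z'}{r}-\tfrac{z}{r^2}-zs^2=0, \end{align*} with $s=s_0r^n(1+o(1))$ and $z=\frac{n}{r}+z_0r+o(r)$ as $r\to 0$, and $s\to 1$, $z\to 0$ exponentially as $r\to\infty$. Then the coefficient $z_0$ in the expansion $z=\frac{n}{r}+z_0r+\dots$ near the origin is negative.
   Context: $s$ is the normalized Higgs magnitude and $z-\frac{n}{r}$ the dimensionless azimuthal $Z$ potential of the Nielsen–Olesen vortex with winding number $n$; $\beta=(M_H/M_Z)^2$. *)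

From Stdlib Require Import Reals.
From Coquelicot Require Import Coquelicot.
Open Scope R_scope.

Definition NO_equations (beta : R) (s ds dds z dz ddz : R -> R) : Prop :=
  forall r, 0 < r ->
    is_derive s r (ds r) /\ is_derive ds r (dds r) /\
    is_derive z r (dz r) /\ is_derive dz r (ddz r) /\
    dds r + ds r / r - (z r ^ 2 + beta / 2 * (s r ^ 2 - 1)) * s r = 0 /\
    ddz r + dz r / r - z r / r ^ 2 - z r * s r ^ 2 = 0.

Definition s_origin (n : nat) (s0 : R) (s : R -> R) : Prop :=
  exists e : R -> R,
    filterlim e (at_right 0) (locally 0) /\
    forall r, 0 < r -> s r = s0 * r ^ n * (1 + e r).

Definition z_origin (n : nat) (z0 : R) (z : R -> R) : Prop :=
  filterlim (fun r => (z r - INR n / r - z0 * r) / r) (at_right 0) (locally 0).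

Definition exp_decay_infty (s z : R -> R) : Prop :=
  exists C m R0 : R, 0 < m /\
    forall r, R0 <= r ->
      Rabs (s r - 1) <= C * exp (- m * r) /\ Rabs (z r) <= C * exp (- m * r).

From Stdlib Require Import Reals Lra Lia.
From Coquelicot Require Import Coquelicot.
Open Scope R_scope.

(* Set curl = z/r + z' = (r z)'/r, the Z magnetic field; the equation says curl' = s^2 z.
   A minimum principle, with z > 0 near 0 (since r z -> n) and z -> 0 at infinity,
   gives z >= 0, so curl is nondecreasing. As r z stays bounded at infinity, curl <= 0
   everywhere, and since s^2 z > 0 near 0, c := curl b < 0 for some small b.
   Integrating (r z)' = r curl <= c r over (0, r] with r z -> n gives
   (z - n/r)/r <= c/2 on (0, b], hence z0 <= c/2 < 0. *)

Lemma ball_R (x eps y : R) : ball x eps y <-> Rabs (y - x) < eps.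
Proof. reflexivity. Qed.

Lemma at_right_iff (x : R) (P : R -> Prop) :
  at_right x P <-> exists d, 0 < d /\ forall y, x < y < x + d -> P y.
Proof.
  split.
  - intros [d Hd]. exists d. split; [apply cond_pos |].
    intros y Hy. apply Hd; [apply ball_R, Rabs_lt_between' |]; lra.
  - intros [d [Hd HP]]. exists (mkposreal d Hd).
    intros y Hy Hxy. apply ball_R, Rabs_lt_between' in Hy. apply HP. simpl in Hy. lra.
Qed.

Lemma at_right_gt (x : R) : at_right x (fun y => x < y).
Proof. apply at_right_iff. exists 1. split; [lra | tauto]. Qed.

Lemma lim_eventually_gt {T : Type} (F : (T -> Prop) -> Prop) {FF : Filter F}
    (f : T -> R) (l a : R) :
  filterlim f F (locally l) -> a < l -> F (fun y => a < f y).
Proof.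
  intros Hf Hal.
  assert (Heps : 0 < l - a) by lra.
  apply (filter_imp (fun y => ball l (mkposreal _ Heps) (f y))).
  - intros y Hy. apply ball_R, Rabs_lt_between' in Hy. simpl in Hy. lra.
  - exact (proj1 (filterlim_locally f l) Hf _).
Qed.

Lemma lim_at_right_le (f : R -> R) (x l M : R) :
  filterlim f (at_right x) (locally l) -> at_right x (fun y => f y <= M) -> l <= M.
Proof.
  intros Hf HM.
  exact (filterlim_le (F := at_right x) f (fun _ => M) l M HM Hf (filterlim_const M)).
Qed.

Lemma lim_at_right_ge (f : R -> R) (x l M : R) :
  filterlim f (at_right x) (locally l) -> at_right x (fun y => M <= f y) -> M <= l.
Proof.
  intros Hf HM.
  exact (filterlim_le (F := at_right x) (fun _ => M) f M l HM (filterlim_const M) Hf).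
Qed.

Lemma lim_at_right_plus (f g : R -> R) (x lf lg : R) :
  filterlim f (at_right x) (locally lf) -> filterlim g (at_right x) (locally lg) ->
  filterlim (fun y => f y + g y) (at_right x) (locally (lf + lg)).
Proof.
  intros Hf Hg. eapply filterlim_comp_2; [exact Hf | exact Hg |].
  exact (filterlim_plus (V := R_NormedModule) lf lg).
Qed.

Lemma lim_at_right_mult (f g : R -> R) (x lf lg : R) :
  filterlim f (at_right x) (locally lf) -> filterlim g (at_right x) (locally lg) ->
  filterlim (fun y => f y * g y) (at_right x) (locally (lf * lg)).
Proof.
  intros Hf Hg. eapply filterlim_comp_2; [exact Hf | exact Hg |].
  exact (filterlim_mult (K := R_AbsRing) lf lg).
Qed.

Lemma lim_at_right_of_ex_derive (f : R -> R) (x : R) :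
  ex_derive f x -> filterlim f (at_right x) (locally (f x)).
Proof.
  intros Hf. eapply filterlim_filter_le_1; [apply filter_le_within |].
  exact (ex_derive_continuous f x Hf).
Qed.

Lemma nondecreasing_of_derive_nonneg (f df : R -> R) (a b : R) :
  (forall x, a <= x <= b -> is_derive f x (df x)) ->
  (forall x, a < x < b -> 0 <= df x) ->
  a <= b -> f a <= f b.
Proof.
  intros Hd Hpos Hab.
  destruct (Req_dec a b) as [<- | Hne]; [lra |].
  destruct (MVT_cor2 f df a b) as [c [Hfc Hc]]; [lra | |].
  - intros c Hc. apply is_derive_Reals, Hd, Hc.
  - specialize (Hpos c Hc). nra.
Qed.

Lemma nonincreasing_of_derive_nonpos (f df : R -> R) (a b : R) :
  (forall x, a <= x <= b -> is_derive f x (df x)) ->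
  (forall x, a < x < b -> df x <= 0) ->
  a <= b -> f b <= f a.
Proof.
  intros Hd Hneg Hab.
  enough (- f a <= - f b) by lra.
  apply (nondecreasing_of_derive_nonneg (fun x => - f x) (fun x => - df x)); [| | exact Hab].
  - intros x Hx. apply (is_derive_opp f), Hd, Hx.
  - intros x Hx. specialize (Hneg x Hx). lra.
Qed.

Lemma derive_eq0_at_min (f : R -> R) (a b x l : R) :
  a < x < b -> is_derive f x l ->
  (forall y, a < y < b -> f x <= f y) -> l = 0.
Proof.
  intros Hx Hd Hmin.
  assert (pr : derivable_pt f x) by (exists l; apply is_derive_Reals, Hd).
  rewrite <- (deriv_minimum f a b x pr); try tauto.
  - symmetry. apply derive_pt_eq_0, is_derive_Reals, Hd.
  - intros y Hy1 Hy2. apply Hmin. lra.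
Qed.

Lemma derive_neg_right (f : R -> R) (x l : R) :
  is_derive f x l -> f x = 0 -> l < 0 ->
  exists d, 0 < d /\ forall y, x < y < x + d -> f y < 0.
Proof.
  intros Hd Hfx Hl.
  destruct (proj1 (is_derive_Reals f x l) Hd (- l)) as [d Hdl]; [lra |].
  exists d. split; [apply cond_pos |]. intros y Hy.
  assert (Hh : Rabs (y - x) < d) by (rewrite Rabs_pos_eq; lra).
  specialize (Hdl (y - x) ltac:(lra) Hh).
  replace (x + (y - x)) with y in Hdl by ring. rewrite Hfx, Rminus_0_r in Hdl.
  apply Rabs_lt_between' in Hdl.
  assert (Hq : f y / (y - x) < 0) by lra.
  assert (f y = f y / (y - x) * (y - x)) by (field; lra).
  nra.
Qed.

Lemma derive2_nonneg_at_min (f df : R -> R) (a b x l : R) :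
  a < x < b ->
  (forall y, a < y < b -> is_derive f y (df y)) -> is_derive df x l ->
  (forall y, a < y < b -> f x <= f y) -> 0 <= l.
Proof.
  intros Hx Hdf Hddf Hmin.
  destruct (Rle_or_lt 0 l) as [| Hl]; [assumption | exfalso].
  assert (Hdfx : df x = 0) by exact (derive_eq0_at_min f a b x _ Hx (Hdf x Hx) Hmin).
  destruct (derive_neg_right df x l Hddf Hdfx Hl) as [d [Hd Hneg]].
  set (y := x + Rmin d (b - x) / 2).
  assert (Hy : x < y < x + d /\ y < b)
    by (unfold y; pose proof (Rmin_l d (b - x)); pose proof (Rmin_r d (b - x));
        pose proof (Rmin_glb_lt d (b - x) 0 Hd ltac:(lra)); lra).
  destruct (MVT_cor2 f df x y) as [c [Hfc Hc]]; [lra | |].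
  - intros c Hc. apply is_derive_Reals, Hdf. lra.
  - assert (df c < 0) by (apply Hneg; lra).
    assert (f x <= f y) by (apply Hmin; lra).
    nra.
Qed.

Lemma rz_lim_of_expansion (z : R -> R) (L z0 : R) :
  filterlim (fun r => (z r - L / r - z0 * r) / r) (at_right 0) (locally 0) ->
  filterlim (fun r => r * z r) (at_right 0) (locally L).
Proof.
  intros Hexp.
  set (q := fun r => (z r - L / r - z0 * r) / r).
  assert (Hlim : filterlim (fun r => L + r ^ 2 * (z0 + q r)) (at_right 0)
                   (locally (L + 0 ^ 2 * (z0 + 0)))).
  { apply lim_at_right_plus; [apply filterlim_const |].
    apply lim_at_right_mult.
    - apply (lim_at_right_of_ex_derive (fun r => r ^ 2)). auto_derive. exact I.
    - apply lim_at_right_plus; [apply filterlim_const | exact Hexp]. }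
  replace (L + 0 ^ 2 * (z0 + 0)) with L in Hlim by ring.
  refine (filterlim_ext_loc _ _ _ Hlim).
  apply at_right_iff. exists 1. split; [lra |]. intros r Hr. unfold q. field. lra.
Qed.

Lemma pos_near_0_of_expansion (z : R -> R) (L z0 : R) :
  0 < L -> filterlim (fun r => (z r - L / r - z0 * r) / r) (at_right 0) (locally 0) ->
  at_right 0 (fun r => 0 < z r).
Proof.
  intros HL Hexp.
  apply (filter_imp (fun r => 0 < r /\ 0 < r * z r)); [intros r [Hr Hrz]; nra |].
  apply filter_and; [apply at_right_gt |].
  exact (lim_eventually_gt _ _ L 0 (rz_lim_of_expansion z L z0 Hexp) HL).
Qed.

Section Azimuthal_equation.

Variables (z dz ddz V : R -> R).
Hypothesis z_derive : forall r, 0 < r -> is_derive z r (dz r).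
Hypothesis dz_derive : forall r, 0 < r -> is_derive dz r (ddz r).
Hypothesis z_ode : forall r, 0 < r -> ddz r + dz r / r - z r / r ^ 2 - z r * V r = 0.
Hypothesis V_nonneg : forall r, 0 < r -> 0 <= V r.

Lemma z_nonneg :
  at_right 0 (fun r => 0 < z r) -> filterlim z (Rbar_locally p_infty) (locally 0) ->
  forall r, 0 < r -> 0 <= z r.
Proof.
  intros Hpos0 Hinf r1 Hr1.
  destruct (Rle_or_lt 0 (z r1)) as [| Hneg]; [assumption | exfalso].
  assert (Ha : exists a, 0 < a < r1 /\ 0 < z a).
  { destruct (proj1 (at_right_iff 0 _) Hpos0) as [d [Hd Hz]].
    exists (Rmin d r1 / 2). pose proof (Rmin_l d r1). pose proof (Rmin_r d r1).
    pose proof (Rmin_glb_lt d r1 0 Hd Hr1). split; [| apply Hz]; lra. }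
  assert (Hb : exists b, r1 < b /\ z r1 < z b).
  { assert (Heps : 0 < - z r1) by lra.
    destruct (proj1 (filterlim_locally z 0) Hinf (mkposreal _ Heps)) as [M HM].
    exists (Rmax M r1 + 1). pose proof (Rmax_l M r1). pose proof (Rmax_r M r1).
    split; [lra |].
    specialize (HM (Rmax M r1 + 1) ltac:(lra)).
    apply ball_R, Rabs_lt_between' in HM. simpl in HM. lra. }
  destruct Ha as [a [Ha Hza]], Hb as [b [Hb Hzb]].
  destruct (continuity_ab_min z a b) as [x [Hmin Hx]]; [lra | |].
  { intros c Hc. apply derivable_continuous_pt.
    exists (dz c). apply is_derive_Reals, z_derive. lra. }
  assert (Hzx : z x <= z r1) by (apply Hmin; lra).
  assert (Hx' : a < x < b).
  { split; apply Rnot_le_lt; intros Hle.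
    - assert (x = a) by lra. subst x. lra.
    - assert (x = b) by lra. subst x. lra. }
  assert (Hmin' : forall y, a < y < b -> z x <= z y) by (intros y Hy; apply Hmin; lra).
  assert (Hdz : dz x = 0) by exact (derive_eq0_at_min z a b x _ Hx' (z_derive x ltac:(lra)) Hmin').
  assert (Hddz : 0 <= ddz x).
  { apply (derive2_nonneg_at_min z dz a b x); auto.
    - intros y Hy. apply z_derive. lra.
    - apply dz_derive. lra. }
  (* at the minimum z' = 0, so the equation gives z'' = z (1/x^2 + V) < 0 *)
  pose proof (z_ode x ltac:(lra)) as Hode. pose proof (V_nonneg x ltac:(lra)).
  rewrite Hdz in Hode.
  assert (0 < / x ^ 2) by (apply Rinv_0_lt_compat, pow_lt; lra).
  unfold Rdiv in Hode. nra.
Qed.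

Definition curl (r : R) : R := z r / r + dz r.

Lemma is_derive_curl (r : R) : 0 < r -> is_derive curl r (z r * V r).
Proof.
  intros Hr. unfold curl.
  pose proof (z_derive r Hr) as Hz. pose proof (dz_derive r Hr) as Hdz.
  auto_derive.
  - repeat split; [exists (dz r); exact Hz | lra | exists (ddz r); exact Hdz].
  - replace (Derive (fun x => z x) r) with (dz r) by (symmetry; apply is_derive_unique, Hz).
    replace (Derive (fun x => dz x) r) with (ddz r) by (symmetry; apply is_derive_unique, Hdz).
    replace (ddz r) with (z r / r ^ 2 + z r * V r - dz r / r) by (pose proof (z_ode r Hr); lra).
    field. lra.
Qed.

Lemma is_derive_rz_sub (k r : R) :
  0 < r -> is_derive (fun r => r * z r - k * r ^ 2 / 2) r (r * (curl r - k)).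
Proof.
  intros Hr. unfold curl. pose proof (z_derive r Hr) as Hz.
  auto_derive; [exists (dz r); exact Hz |].
  replace (Derive (fun x => z x) r) with (dz r) by (symmetry; apply is_derive_unique, Hz).
  field. lra.
Qed.

Section Nonnegative_z.

Hypothesis Hz_nonneg : forall r, 0 < r -> 0 <= z r.

Lemma curl_nondecreasing (u v : R) : 0 < u -> u <= v -> curl u <= curl v.
Proof.
  intros Hu Huv.
  apply (nondecreasing_of_derive_nonneg curl (fun r => z r * V r)); [| | exact Huv].
  - intros r Hr. apply is_derive_curl. lra.
  - intros r Hr. pose proof (Hz_nonneg r ltac:(lra)). pose proof (V_nonneg r ltac:(lra)). nra.
Qed.

Lemma curl_nonpos :
  (exists M R1, forall r, R1 <= r -> r * Rabs (z r) <= M) -> forall r, 0 < r -> curl r <= 0.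
Proof.
  intros [M [R1 HM]] r1 Hr1.
  destruct (Rle_or_lt (curl r1) 0) as [| Hk]; [assumption | exfalso].
  set (k := curl r1) in Hk.
  set (D := 1 + 2 * (Rabs (M - r1 * z r1) + 1) / k).
  assert (HD : k * (D - 1) = 2 * (Rabs (M - r1 * z r1) + 1)) by (unfold D; field; lra).
  assert (HD1 : 1 <= D).
  { enough (0 <= D - 1) by lra. pose proof (Rabs_pos (M - r1 * z r1)). nra. }
  set (r := Rmax R1 r1 + D).
  assert (Hr : R1 <= r /\ r1 + D <= r)
    by (unfold r; pose proof (Rmax_l R1 r1); pose proof (Rmax_r R1 r1); lra).
  assert (Hgrow : r1 * z r1 - k * r1 ^ 2 / 2 <= r * z r - k * r ^ 2 / 2).
  { apply (nondecreasing_of_derive_nonneg (fun x => x * z x - k * x ^ 2 / 2)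
                                           (fun x => x * (curl x - k))); [| | lra].
    - intros x Hx. apply is_derive_rz_sub. lra.
    - intros x Hx. assert (k <= curl x) by (apply curl_nondecreasing; lra). nra. }
  assert (Hbound : r * z r <= M).
  { pose proof (HM r (proj1 Hr)). pose proof (Rle_abs (z r)). nra. }
  pose proof (Rle_abs (M - r1 * z r1)).
  assert (D <= (r - r1) * (r + r1)) by nra.
  nra.
Qed.

Lemma curl_neg_near_0 :
  (exists M R1, forall r, R1 <= r -> r * Rabs (z r) <= M) ->
  at_right 0 (fun r => 0 < z r * V r) ->
  exists b, 0 < b /\ curl b < 0.
Proof.
  intros Hbound Hpos.
  destruct (proj1 (at_right_iff 0 _) Hpos) as [d [Hd HzV]].
  exists (d / 4). split; [lra |].
  assert (curl (d / 4) < curl (d / 2)).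
  { apply (incr_function curl 0 d (fun r => z r * V r)); simpl; try lra.
    - intros r Hr0 Hrd. apply is_derive_curl. exact Hr0.
    - intros r Hr0 Hrd. apply Rlt_gt, HzV. lra. }
  pose proof (curl_nonpos Hbound (d / 2) ltac:(lra)). lra.
Qed.

End Nonnegative_z.

Lemma expansion_coeff_le (L z0 c b : R) :
  0 < b -> (forall r, 0 < r <= b -> curl r <= c) ->
  filterlim (fun r => (z r - L / r - z0 * r) / r) (at_right 0) (locally 0) ->
  z0 <= c / 2.
Proof.
  intros Hb Hcurl Hexp.
  set (F := fun r => r * z r - c * r ^ 2 / 2).
  assert (HF_lim : filterlim F (at_right 0) (locally L)).
  { assert (H := lim_at_right_plus _ _ 0 _ _ (rz_lim_of_expansion z L z0 Hexp)
                   (lim_at_right_of_ex_derive (fun r => - (c * r ^ 2 / 2)) 0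
                      ltac:(auto_derive; exact I))).
    assert (E : L + - (c * 0 ^ 2 / 2) = L) by field. rewrite E in H. exact H. }
  assert (HF_le : forall r, 0 < r <= b -> F r <= L).
  { intros r Hr. apply (lim_at_right_ge F 0 L); [exact HF_lim |].
    apply at_right_iff. exists r. split; [lra |]. intros a Ha.
    apply (nonincreasing_of_derive_nonpos F (fun x => x * (curl x - c))); [| | lra].
    - intros x Hx. apply is_derive_rz_sub. lra.
    - intros x Hx. assert (curl x <= c) by (apply Hcurl; lra). nra. }
  apply (lim_at_right_le (fun r => z0 + (z r - L / r - z0 * r) / r) 0).
  - replace z0 with (z0 + 0) at 1 by ring.
    apply lim_at_right_plus; [apply filterlim_const | exact Hexp].
  - apply at_right_iff. exists b. split; [exact Hb |]. intros r Hr.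
    assert (E : z0 + (z r - L / r - z0 * r) / r - c / 2 = (F r - L) * / r ^ 2)
      by (unfold F; field; lra).
    assert (0 < / r ^ 2) by (apply Rinv_0_lt_compat, pow_lt; lra).
    pose proof (HF_le r ltac:(lra)). nra.
Qed.

End Azimuthal_equation.

Lemma mul_exp_neg_lt_1 (x : R) : x * exp (- x) < 1.
Proof.
  pose proof (exp_ineq1_le x). pose proof (exp_pos (- x)).
  assert (exp (- x) * exp x = 1) by (rewrite <- exp_plus, Rplus_opp_l; apply exp_0).
  nra.
Qed.

Lemma exp_decay_inv_bound (f : R -> R) (C m R0 : R) :
  0 < m -> (forall r, R0 <= r -> Rabs (f r) <= C * exp (- m * r)) ->
  forall r, R0 <= r -> r * Rabs (f r) <= Rabs C / m.
Proof.
  intros Hm Hf r Hr.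
  assert (0 <= Rabs C / m) by (apply Rdiv_le_0_compat; [apply Rabs_pos | lra]).
  destruct (Rle_or_lt 0 r) as [Hr0 | Hr0]; [| pose proof (Rabs_pos (f r)); nra].
  pose proof (mul_exp_neg_lt_1 (m * r)) as Hexp.
  replace (- (m * r)) with (- m * r) in Hexp by ring.
  pose proof (exp_pos (- m * r)). pose proof (Rle_abs C). pose proof (Hf r Hr).
  assert (Hle : r * Rabs (f r) <= Rabs C / m * (m * r * exp (- m * r))).
  { replace (Rabs C / m * (m * r * exp (- m * r))) with (r * (Rabs C * exp (- m * r)))
      by (field; lra).
    apply Rmult_le_compat_l; [exact Hr0 | nra]. }
  pose proof (Rmult_le_compat_l (Rabs C / m) _ _ H (Rlt_le _ _ Hexp)). lra.
Qed.

Lemma lim_p_infty_of_inv_bound (f : R -> R) (M R1 : R) :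
  (forall r, R1 <= r -> r * Rabs (f r) <= M) -> filterlim f (Rbar_locally p_infty) (locally 0).
Proof.
  intros Hf. apply filterlim_locally. intros eps.
  exists (Rmax R1 (Rmax 0 (M / eps))). intros r Hr.
  pose proof (Rmax_l R1 (Rmax 0 (M / eps))). pose proof (Rmax_r R1 (Rmax 0 (M / eps))).
  pose proof (Rmax_l 0 (M / eps)). pose proof (Rmax_r 0 (M / eps)).
  pose proof (cond_pos eps). pose proof (Hf r ltac:(lra)).
  assert (M < eps * r) by (replace M with (eps * (M / eps)) by (field; lra); nra).
  apply ball_R. rewrite Rminus_0_r. nra.
Qed.

Lemma s_origin_coeff_neq0 (n : nat) (s0 : R) (s : R -> R) :
  s_origin n s0 s -> filterlim (fun r => s r - 1) (Rbar_locally p_infty) (locally 0) ->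
  s0 <> 0.
Proof.
  intros [e [_ Hs]] Hinf Hs0.
  assert (Hev : Rbar_locally p_infty (fun r => 0 < r /\ ball 0 1 (s r - 1))).
  { apply filter_and; [exists 0; auto |].
    exact (proj1 (filterlim_locally _ 0) Hinf (mkposreal 1 Rlt_0_1)). }
  destruct (Hierarchy.filter_ex _ Hev) as [r [Hr Hball]].
  apply ball_R, Rabs_lt_between' in Hball. rewrite (Hs r Hr), Hs0 in Hball. simpl in Hball. lra.
Qed.

Lemma s_origin_eventually_neq0 (n : nat) (s0 : R) (s : R -> R) :
  s_origin n s0 s -> s0 <> 0 -> at_right 0 (fun r => s r <> 0).
Proof.
  intros [e [He Hs]] Hs0.
  apply (filter_imp (fun r => 0 < r /\ -1 < e r)).
  - intros r [Hr Her]. rewrite (Hs r Hr).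
    apply Rmult_integral_contrapositive_currified; [| lra].
    apply Rmult_integral_contrapositive_currified; [exact Hs0 |].
    apply pow_nonzero. lra.
  - apply filter_and; [apply at_right_gt | exact (lim_eventually_gt _ e 0 (-1) He ltac:(lra))].
Qed.

Theorem lemma2 (n : nat) (beta s0 z0 : R) (s ds dds z dz ddz : R -> R) :
  (1 <= n)%nat -> 0 < beta ->
  NO_equations beta s ds dds z dz ddz ->
  s_origin n s0 s ->
  z_origin n z0 z ->
  exp_decay_infty s z ->
  z0 < 0.
Proof.
  intros Hn _ HNO Hs Hz [C [m [R0 [Hm Hdec]]]].
  set (V := fun r => s r ^ 2).
  assert (z_derive : forall r, 0 < r -> is_derive z r (dz r)) by apply HNO.
  assert (dz_derive : forall r, 0 < r -> is_derive dz r (ddz r)) by apply HNO.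
  assert (z_ode : forall r, 0 < r -> ddz r + dz r / r - z r / r ^ 2 - z r * V r = 0) by apply HNO.
  assert (V_nonneg : forall r, 0 < r -> 0 <= V r) by (intros r _; apply pow2_ge_0).
  pose proof (exp_decay_inv_bound z C m R0 Hm (fun r Hr => proj2 (Hdec r Hr))) as z_inv.
  pose proof (exp_decay_inv_bound (fun r => s r - 1) C m R0 Hm
                (fun r Hr => proj1 (Hdec r Hr))) as s_inv.
  pose proof (s_origin_coeff_neq0 n s0 s Hs (lim_p_infty_of_inv_bound _ _ _ s_inv)) as Hs0.
  assert (z_pos : at_right 0 (fun r => 0 < z r))
    by (apply (pos_near_0_of_expansion z (INR n) z0); [apply lt_0_INR; lia | exact Hz]).
  assert (zV_pos : at_right 0 (fun r => 0 < z r * V r)).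
  { apply (filter_imp (fun r => 0 < z r /\ s r <> 0)).
    - intros r [Hzr Hsr]. unfold V. pose proof (pow2_gt_0 _ Hsr). nra.
    - apply filter_and; [exact z_pos | exact (s_origin_eventually_neq0 n s0 s Hs Hs0)]. }
  pose proof (z_nonneg z dz ddz V z_derive dz_derive z_ode V_nonneg z_pos
                (lim_p_infty_of_inv_bound _ _ _ z_inv)) as Hz_nonneg.
  destruct (curl_neg_near_0 z dz ddz V z_derive dz_derive z_ode V_nonneg Hz_nonneg
              (ex_intro _ _ (ex_intro _ _ z_inv)) zV_pos) as [b [Hb Hcurl]].
  assert (z0 <= curl z dz b / 2); [| lra].
  apply (expansion_coeff_le z dz z_derive (INR n) z0 _ b Hb); [| exact Hz].
  intros r Hr. exact (curl_nondecreasing z dz ddz V z_derive dz_derive z_ode V_nonneg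
                        Hz_nonneg r b (proj1 Hr) (proj2 Hr)).
Qed.
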